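(* Let $G$ be a non-trivial finite abelian group with $G\not\simeq C_2^2$ and let $f$ be an automorphism of $\mathcal{P}_0(G)$ with trivial pullback. Suppose that the following two conditions hold: (A) for every proper subgroup $H$ of $G$, the restriction of $f$ to $\mathcal{P}_{0}(H)$ is the identity; (B) for every subgroup $H$ of $G$ that is cyclic of prime order, the induced automorphism $f_{G/H}$ of $\mathcal{P}_0(G/H)$ is the identity. Then $f$ is the identity.
   Context: For an additively written finite abelian group $G$, $\mathcal{P}_{0}(G)$ is the monoid of all subsets of $G$ containing $0$, with setwise addition and identity $\{0\}$. An automorphism $f$ of $\mathcal{P}_0(G)$ has trivial pullback if $f(\{0,a\})=\{0,a\}$ for all $a\in G$. For a subgroup $H$, let $\mathcal{P}_{0,H}(G)=\{H+X:X\in\mathcal{P}_0(G)\}$, a monoid with identity $H$, and let $\varphi_H:\mathcal{P}_{0,H}(G)\to\mathcal{P}_0(G/H)$, $H+X\mapsto\{a+H:a\in X\}$, which is a monoid isomorphism. If $f$ has trivial pullback, then $f(H)=H$ and $f$ maps $\mathcal{P}_{0,H}(G)$ onto itself; the induced automorphism is $f_{G/H}=\varphi_H\circ f|_{\mathcal{P}_{0,H}(G)}\circ\varphi_H^{-1}$. Restriction of $f$ to $\mathcal{P}_0(H)$ makes sense since $f$ maps $\mathcal{P}_0(H)$ onto itself for such $f$. $C_2^2$ is the Klein four-group. *)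

(* A finite abelian group G is written multiplicatively as a
   group G : {group gT} with abelian G; identity 1, setwise product A * B. *)
From mathcomp Require Import all_boot all_fingroup all_solvable.
From mathcomp Require Import zmodp.
Set Implicit Arguments. Unset Strict Implicit. Unset Printing Implicit Defensive.
Local Open Scope group_scope.

Section P0.
Variable gT : finGroupType.

Definition P0 (G : {set gT}) : pred {set gT} :=
  [pred A : {set gT} | (A \subset G) && (1 \in A)].

(* f is a monoid automorphism of P_0(G) (values of f outside P_0(G) irrelevant). *)
Definition P0_aut (G : {set gT}) (f : {set gT} -> {set gT}) : Prop :=
  [/\ {in P0 G, forall A, f A \in P0 G},
      {in P0 G &, injective f},
      {in P0 G, forall B, exists2 A, A \in P0 G & f A = B},
      {in P0 G &, forall A B, f (A * B) = f A * f B}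
    & f 1 = 1].

Definition trivial_pullback (G : {set gT}) (f : {set gT} -> {set gT}) : Prop :=
  forall a, a \in G -> f [set 1; a] = [set 1; a].

(* induced automorphism f_{G/H} = phi_H o f o phi_H^{-1}, where
   phi_H(H X) = {xH : x in X} and phi_H^{-1}(B) = union of the cosets in B
   (inside G). *)
Definition induced (G H : {set gT}) (f : {set gT} -> {set gT})
  (B : {set coset_of H}) : {set coset_of H} :=
  coset H @: f (G :&: coset H @^-1: B).

End P0.
Arguments induced {gT} G H f B.

(* Since f commutes with right multiplication by every pair {1, x}, it fixes
   G, and by descending induction on |A| we may assume that f fixes each
   A{1, x} different from A.  Comparing A with f A point by point then gives
   f A = A, unless A or f A is periodic (A{1, x} = A for some x <> 1) or a
   punctured group G \ {u}.  A periodic set is a union of cosets of a subgroup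
   H of prime order, hence is fixed by (A) applied to H and (B) applied to G/H.
   The punctured groups are permuted by f, say f (G \ {g}) = G \ {s g}.  If G
   has an element of order > 2, the sets G \ {g, g'} show that (s g) g^-1 does
   not depend on g, and s g <> 1 forces this constant to be 1.  If G is
   elementary abelian of order at least 8, then G \ {a} = V Y where
   Y = {1, b, ab} lies in the proper subgroup <a, b> and V = G \ {a, b, ab}
   misses two points, which excludes the exceptional cases of the comparison
   argument for V. *)

From mathcomp Require Import all_boot all_fingroup all_solvable.
From mathcomp Require Import zmodp.
Set Implicit Arguments. Unset Strict Implicit. Unset Printing Implicit Defensive.
Local Open Scope group_scope.

Section SetProducts.
Variable gT : finGroupType.
Implicit Types (G : {group gT}) (A X Y : {set gT}) (a d g x z : gT).

Lemma mem_mul_pair X x z :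
  (z \in X * [set 1; x]) = (z \in X) || (z * x^-1 \in X).
Proof.
apply/mulsgP/orP => [[y w yX] | [zX | zxX]].
- rewrite !inE => /orP [] /eqP -> ->.
    by left; rewrite mulg1.
  by right; rewrite mulgK.
- by exists z 1; rewrite ?mulg1 // !inE eqxx.
- by exists (z * x^-1) x; rewrite ?mulgVK // !inE eqxx orbT.
Qed.

Lemma mul_pair_eq_notin X Y x z :
  X * [set 1; x] = Y * [set 1; x] -> z \notin X -> z * x^-1 \notin X -> z \notin Y.
Proof.
move=> eXY zX zxX; apply: contra (_ : z \notin X * [set 1; x]) => [zY|].
  by rewrite eXY mem_mul_pair zY.
by rewrite mem_mul_pair negb_or zX.
Qed.

Lemma mul_pair_idem X x : x * x = 1 ->
  X * [set 1; x] * [set 1; x] = X * [set 1; x].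
Proof.
move=> xx; rewrite -mulgA; congr (_ * _); apply/setP => z.
rewrite mem_mul_pair !inE -eq_mulgV1 (canF_eq (mulgKV x)) xx.
by case: (z == 1); case: (z == x).
Qed.

Lemma mul_pair_cycle A x : A * [set 1; x] = A -> A * <[x]> = A.
Proof.
move=> eA; apply/eqP; rewrite eqEsubset mulg_subl ?group1 // andbT.
apply/subsetP => _ /mulsgP [a _ aA /cycleP [n ->] ->].
elim: n => [|n IH]; first by rewrite mulg1.
by rewrite expgSr mulgA -eA mem_mul_pair mulgK IH orbT.
Qed.

Lemma setD1_mul_pair G g x :
  x \in G^# -> (G :\ g) * [set 1; x] = G.
Proof.
case/setD1P => x1 xG; apply/setP => z; rewrite mem_mul_pair !inE.
case zG: (z \in G); last first.
  by rewrite !andbF /=; apply/negP => /andP [_]; rewrite groupMr ?groupV ?zG.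
rewrite groupM ?groupV //= !andbT.
by case: eqP => // ->; rewrite -{2}[g]mulg1 (inj_eq (mulgI g)) invg_eq1.
Qed.

Lemma setD2_mul_pair G a d :
  a \in G -> d \in G -> d ^+ 2 != 1 ->
  (G :\: [set a * d; a]) * [set 1; d] = G :\ (a * d).
Proof.
move=> aG dG d2; apply/setP => z; rewrite mem_mul_pair !inE.
case zG: (z \in G); last first.
  by rewrite !andbF /=; apply/negP => /andP [_]; rewrite groupMr ?groupV ?zG.
rewrite groupM ?groupV //= !andbT.
have [->|zad] /= := eqVneq z (a * d); first by rewrite mulgK eqxx !orbT.
have [->|za] //= := eqVneq z a.
rewrite (inj_eq (mulgI a)) -{2}[a]mulg1 (inj_eq (mulgI a)) invg_eq1 negb_or.
apply/andP; split; apply: contra d2 => /eqP e.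
  by rewrite expgS expg1 -{1}e mulVg.
by rewrite e expg1n.
Qed.

Definition periodic G A := exists2 x, x \in G^# & A * [set 1; x] = A.

Lemma setD1_or_periodic_or_moved G A z : A \subset G -> z \in G :\: A ->
  [\/ A = G :\ z, periodic G A
     | exists2 v, v \in G :\: A & A * [set 1; v^-1 * z] != A].
Proof.
move=> sAG /setDP [zG zA].
have [/exists_inP [v vGA nAv] | /exists_inP allv] :=
  boolP [exists v in G :\: A, A * [set 1; v^-1 * z] != A].
  by constructor 3; exists v.
have [/exists_inP [v vGA vz] | /exists_inP onlyz] :=
  boolP [exists v in G :\: A, v != z].
  constructor 2; exists (v^-1 * z).
    case/setDP: vGA => vG _; rewrite !inE groupM ?groupV // andbT.
    by rewrite -(inj_eq (mulgI v)) mulKVg mulg1 eq_sym.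
  by apply/eqP/negPn/negP => nAv; apply: allv; exists v.
constructor 1; apply/setP => y; rewrite !inE.
have [-> | yz] /= := eqVneq y z; first by apply/negbTE.
apply/idP/idP => [/(subsetP sAG) // | yG].
by apply/negPn/negP => yA; apply: onlyz; exists y; rewrite ?inE ?yA ?yG.
Qed.

End SetProducts.

Section Exponent2.
Variables (gT : finGroupType) (G : {group gT}).
Hypothesis abelG : 2.-abelem G.

Let sq1 x : x \in G -> x ^+ 2 = 1.
Proof. by case/abelemP: abelG => // _; apply. Qed.

Lemma abelem2_mulgg x : x \in G -> x * x = 1.
Proof. by move/sq1; rewrite expgS expg1. Qed.

Lemma abelem2_invg x : x \in G -> x^-1 = x.
Proof. by move=> xG; apply: (mulgI x); rewrite mulgV abelem2_mulgg. Qed.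

Lemma isog_C2xC2 : #|G| = 4 -> G \isog [set: 'I_2 * 'I_2].
Proof.
move=> oG; rewrite (isog_abelem_card _ abelG) cardsT card_prod card_ord oG eqxx andbT.
apply/abelemP => //; split.
  apply/centsP => [[[[|[|?]] ?] [[|[|?]] ?]]] _ [[[|[|?]] ?] [[|[|?]] ?]] _;
  by apply/eqP.
by move=> [[[|[|?]] ?] [[|[|?]] ?]] _; apply/eqP.
Qed.

Lemma card_join_cycles_le4 a b : a \in G -> b \in G -> #|<[a]> <*> <[b]>| <= 4.
Proof.
move=> aG bG; have cGG := abelem_abelian abelG.
have o2 x : x \in G -> #|<[x]>| <= 2.
  by move=> xG; rewrite dvdn_leq // order_dvdn sq1.
rewrite comm_joingE; last first.
  by apply: centC; rewrite (subset_trans _ (subset_trans cGG (centS _))) ?cycle_subG.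
apply: leq_trans (_ : #|<[a]>| * #|<[b]>| <= 4)%N.
  by rewrite mul_cardG leq_pmulr ?cardG_gt0.
exact: leq_mul (o2 a aG) (o2 b bG).
Qed.

Lemma proper_of_card_le4 (K : {group gT}) :
  ~ G \isog [set: 'I_2 * 'I_2] -> 2 < #|G| -> K \subset G -> #|K| <= 4 ->
  K \proper G.
Proof.
move=> notC2xC2 G_gt2 sKG K4; rewrite properEcard sKG (leq_ltn_trans K4) //.
have := card_pgroup (abelem_pgroup abelG); move: (logn 2 _) => n oG.
case: n oG => [|[|[|n]]] oG; rewrite oG // in G_gt2 *.
  by case: notC2xC2; apply: isog_C2xC2.
by rewrite !expnS !mulnA (leq_trans _ (leq_pmulr _ (expn_gt0 2 n))).
Qed.

Lemma join_cycles_proper a b :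
  ~ G \isog [set: 'I_2 * 'I_2] -> a \in G^# -> b \in G :\: [set 1; a] ->
  <[a]> <*> <[b]> \proper G.
Proof.
move=> notC2xC2 /setD1P [a1 aG] /setDP [bG b1a].
apply: proper_of_card_le4; rewrite ?card_join_cycles_le4 //.
  apply: leq_trans (subset_leq_card (_ : b |: [set 1; a] \subset G)).
    by rewrite cardsU1 cards2 b1a eq_sym a1.
  by apply/subsetP => z; rewrite !inE => /or3P [] /eqP ->.
by rewrite join_subG !cycle_subG aG bG.
Qed.

Lemma setD3_mul_set3 a b : a \in G -> b \in G -> 1 \notin [set a; b; a * b] ->
  (G :\: [set a; b; a * b]) * [set 1; a * b; b] = G :\ a.
Proof.
move=> aG bG N1; have ab_ba : a * b = b * a by apply: (centsP (abelem_abelian abelG)).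
have V1 : 1 \in G :\: [set a; b; a * b] by rewrite inE N1 group1.
apply/setP => z; apply/mulsgP/setD1P => [[v y /setDP [vG vN] yY ->] | [za zG]].
  have yG : y \in G.
    by move: yY; rewrite !inE => /orP [/orP [] | ] /eqP ->; rewrite ?groupM.
  split; last exact: groupM.
  move: yY vN; rewrite !inE => /orP [/orP [] | ] /eqP -> vN;
    apply: contra vN => /eqP e.
  - by rewrite -e mulg1 eqxx.
  - have ab_a : a * (a * b)^-1 = b by rewrite ab_ba invMg mulKVg abelem2_invg.
    by rewrite -(mulgK (a * b) v) e ab_a eqxx orbT.
  - by rewrite -(mulgK b v) e abelem2_invg ?eqxx ?orbT.
have [zV | ] := boolP (z \in G :\: [set a; b; a * b]).
  by exists z 1; rewrite ?mulg1 // !inE eqxx.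
rewrite !inE zG (negPf za) /= andbT => /negPn /orP [] /eqP ->.
  by exists 1 b; rewrite ?mul1g // !inE eqxx orbT.
by exists 1 (a * b); rewrite ?mul1g // !inE eqxx orbT.
Qed.

End Exponent2.

Section StableQuotients.
Variables (gT : finGroupType) (H : {group gT}).
Implicit Types (G : {group gT}) (A B : {set gT}).

Lemma setI_cosetpre_quotient G A :
  G \subset 'N(H) -> A \subset G -> H * A = A -> G :&: coset H @^-1: (A / H) = A.
Proof.
move=> nHG sAG HA; have := quotientK (subset_trans sAG nHG); rewrite morphpreE.
by rewrite -(setIidPl nHG) -setIA => ->; rewrite HA; apply/setIidPr.
Qed.

Lemma quotient_inj_stable A B :
  A \subset 'N(H) -> B \subset 'N(H) -> H * A = A -> H * B = B ->
  A / H = B / H -> A = B.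
Proof. by move=> nHA nHB HA HB eAB; rewrite -HA -HB -!quotientK // eAB. Qed.

End StableQuotients.

Section P0Sets.
Variables (gT : finGroupType) (G : {group gT}).

Lemma P0_group : (G : {set gT}) \in P0 G.
Proof. by rewrite inE subxx group1. Qed.

Lemma P0_pair x : x \in G -> [set 1; x] \in P0 G.
Proof.
by move=> xG; rewrite !inE eqxx andbT; apply/subsetP => z /set2P [] ->.
Qed.

Lemma P0_mul A B : A \in P0 G -> B \in P0 G -> A * B \in P0 G.
Proof.
by case/andP => sAG A1 /andP [sBG B1]; rewrite inE mul_subG //= -[1]mulg1 mem_mulg.
Qed.

Lemma P0_setD1 g : g != 1 -> G :\ g \in P0 G.
Proof. by move=> g1; rewrite inE subsetDl !inE eq_sym g1 group1. Qed.

Lemma subset_or_setD1_or_periodic X Y :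
  X \in P0 G -> Y \in P0 G ->
  (forall x, x \in G -> X * [set 1; x] != X ->
     X * [set 1; x] = Y * [set 1; x]) ->
  [\/ exists2 u, u \in G^# & X = G :\ u, periodic G X | Y \subset X].
Proof.
move=> /andP [sXG X1] /andP [sYG _] eXY.
have [|/subsetPn [z zY zX]] := boolP (Y \subset X); first by constructor 3.
have zG := subsetP sYG z zY; have zGX : z \in G :\: X by rewrite inE zX.
have [eX | perX | [v /setDP [vG vX] moved]] := setD1_or_periodic_or_moved sXG zGX.
- constructor 1; exists z => //.
  by rewrite in_setD1 zG andbT; apply: contraNneq zX => ->.
- by constructor 2.
have zvG : v^-1 * z \in G by rewrite groupM ?groupV.
have := mul_pair_eq_notin (eXY _ zvG moved) zX.
by rewrite invMg invgK mulKVg => /(_ vX); rewrite zY.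
Qed.

End P0Sets.

Section TrivialPullback.
Variables (gT : finGroupType) (G : {group gT}) (f : {set gT} -> {set gT}).
Hypotheses (f_aut : P0_aut G f) (f_pullback : trivial_pullback G f).

Lemma f_P0 A : A \in P0 G -> f A \in P0 G.
Proof. by case: f_aut => + _ _ _ _; apply. Qed.

Lemma f_inj : {in P0 G &, injective f}.
Proof. by case: f_aut. Qed.

Lemma f_mul : {in P0 G &, forall A B, f (A * B) = f A * f B}.
Proof. by case: f_aut. Qed.

Lemma f_mul_pair A x :
  A \in P0 G -> x \in G -> f (A * [set 1; x]) = f A * [set 1; x].
Proof. by move=> AP xG; rewrite f_mul ?P0_pair ?f_pullback. Qed.

Lemma f_group : f G = G.
Proof.
have /andP [sfG fG1] := f_P0 (P0_group G).
have fG_stable x : x \in G -> f G * [set 1; x] = f G.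
  move=> xG; rewrite -f_mul_pair ?P0_group //; congr f.
  by apply: (mulGSgid (set21 1 x)); case/andP: (P0_pair xG).
apply/eqP; rewrite eqEsubset sfG; apply/subsetP => x xG.
by rewrite -(fG_stable x xG) mem_mul_pair mulgV fG1 orbT.
Qed.

Lemma f_fixed_or_setD1 A :
  A \in P0 G ->
  (forall x, x \in G -> A * [set 1; x] != A ->
     f (A * [set 1; x]) = A * [set 1; x]) ->
  (forall B, B \in P0 G -> periodic G B -> f B = B) ->
  [\/ f A = A, exists2 u, u \in G^# & A = G :\ u
     | exists2 u, u \in G^# & f A = G :\ u].
Proof.
move=> AP fix_moves fix_periodic; have fAP := f_P0 AP.
have fA_moves x : x \in G -> A * [set 1; x] != A ->
    A * [set 1; x] = f A * [set 1; x].
  by move=> xG moved; rewrite -f_mul_pair // fix_moves.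
have A_moves x : x \in G -> f A * [set 1; x] != f A ->
    f A * [set 1; x] = A * [set 1; x].
  move=> xG moved; rewrite fA_moves //.
  by apply: contraNneq moved => eA; rewrite -f_mul_pair // eA.
have [[u u1 eA] | perA | sfAA] := subset_or_setD1_or_periodic AP fAP fA_moves.
- by constructor 2; exists u.
- by constructor 1; apply: fix_periodic.
have [[u u1 efA] | perfA | sAfA] := subset_or_setD1_or_periodic fAP AP A_moves.
- by constructor 3; exists u.
- by constructor 1; apply: (f_inj fAP AP); rewrite fix_periodic.
- by constructor 1; apply/eqP; rewrite eqEsubset sfAA.
Qed.

Lemma f_setD1 g : g \in G^# -> exists2 h, h \in G^# & f (G :\ g) = G :\ h.
Proof.
case/setD1P => g1 gG; have MP := P0_setD1 G g1.
have /andP [sfMG fM1] := f_P0 MP.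
have /subsetPn [h hG hfM] : ~~ (G \subset f (G :\ g)).
  apply/negP => sGfM; have eM : G :\ g = G.
    by apply: (f_inj MP (P0_group G)); apply/eqP; rewrite f_group eqEsubset sfMG.
  by move/setP/(_ g): eM; rewrite !inE eqxx gG.
exists h; first by rewrite in_setD1 hG andbT; apply: contraNneq hfM => ->.
apply/setP => z; rewrite !inE.
have [-> | zh] /= := eqVneq z h; first exact/negbTE.
apply/idP/idP => [/(subsetP sfMG) // | zG]; apply/negPn/negP => zfM.
have x1 : z^-1 * h \in G^#.
  by rewrite in_setD1 groupM ?groupV // andbT -(inj_eq (mulgI z)) mulKVg mulg1 eq_sym.
have : h \in f (G :\ g) * [set 1; z^-1 * h].
  by rewrite -f_mul_pair ?setD1_mul_pair ?f_group // (setD1P x1).2.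
by rewrite mem_mul_pair (negPf hfM) invMg invgK mulKVg (negPf zfM).
Qed.

Lemma f_setD1_shift g g' h h' :
  g \in G^# -> g' \in G^# -> (g'^-1 * g) ^+ 2 != 1 -> h \in G ->
  f (G :\ g) = G :\ h -> f (G :\ g') = G :\ h' -> h' * g'^-1 = h * g^-1.
Proof.
(* W := G \ {g, g'} satisfies W{1, d} = G \ {g} and W{1, d^-1} = G \ {g'};
   both h and h d^-1 lie outside f W, which forces h' = h d^-1. *)
case/setD1P => g1 gG /setD1P [g'1 g'G] d2 hG eh eh'; set d := g'^-1 * g in d2.
have dG : d \in G by rewrite groupM ?groupV.
have WP : G :\: [set g; g'] \in P0 G.
  by rewrite inE subsetDl !inE group1 !(eq_sym 1) (negPf g1) (negPf g'1).
have W_d : (G :\: [set g; g']) * [set 1; d] = G :\ g.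
  by have := setD2_mul_pair g'G dG d2; rewrite mulKVg.
have W_d' : (G :\: [set g; g']) * [set 1; d^-1] = G :\ g'.
  have dV : d^-1 = g^-1 * g' by rewrite invMg invgK.
  have := setD2_mul_pair gG (groupVr dG); rewrite expgVn invg_eq1 => /(_ d2).
  by rewrite dV mulKVg setUC.
have := f_mul_pair WP dG; rewrite W_d eh => /setP/(_ h).
rewrite mem_mul_pair !inE eqxx => /esym/norP [hfW hdfW].
have := f_mul_pair WP (groupVr dG); rewrite W_d' eh' => /setP/(_ (h * d^-1)).
rewrite mem_mul_pair invgK mulgKV (negPf hfW) (negPf hdfW) !inE.
rewrite groupM ?groupV // andbT orbF => /negbFE/eqP <-.
by rewrite /d invMg invgK mulgA mulgK.
Qed.

Hypothesis cGG : abelian G.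

Lemma f_setD1_id_of_exponent_gt2 t : t \in G -> t ^+ 2 != 1 ->
  {in G^#, forall g, f (G :\ g) = G :\ g}.
Proof.
move=> tG t2.
have shift g g' h h' : g \in G^# -> g' \in G^# -> h \in G ->
    f (G :\ g) = G :\ h -> f (G :\ g') = G :\ h' -> h' * g'^-1 = h * g^-1.
  move=> gG1 g'G1 hG eh eh'; have [/setD1P [g1 gG] /setD1P [g'1 g'G]] := (gG1, g'G1).
  have [e | d2] := eqVneq ((g'^-1 * g) ^+ 2) 1; last first.
    exact: f_setD1_shift d2 hG eh eh'.
  (* Otherwise pass through g * s, where s = t or t^-1 makes g * s <> 1. *)
  have [s [sG s2 gs1]] : exists s, [/\ s \in G, s ^+ 2 != 1 & g * s != 1].
    have [gt1 | ] := eqVneq (g * t) 1; last by exists t.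
    exists t^-1; rewrite groupV expgVn invg_eq1; split=> //.
    apply: contra t2 => /eqP /(canRL (mulgKV t)); rewrite mul1g => gt.
    by rewrite expgS expg1 -{1}gt gt1.
  have kG1 : g * s \in G^# by rewrite in_setD1 gs1 groupM.
  have [hk /setD1P [_ hkG] ehk] := f_setD1 kG1.
  have comm_s : commute (g'^-1 * g) s by apply: (centsP cGG); rewrite ?groupM ?groupV.
  rewrite (f_setD1_shift kG1 g'G1 _ hkG ehk eh'); last first.
    by rewrite mulgA expgMn // e mul1g.
  apply: (f_setD1_shift gG1 kG1 _ hG eh ehk).
  by rewrite invMg mulgKV expgVn invg_eq1.
(* At g = c^-1 the constant shift c would give f (G \ {g}) = G \ {1}. *)
move=> g gG1; have [h hG1 eh] := f_setD1 gG1; have [h1 hG] := setD1P hG1.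
suff /eqP : h * g^-1 = 1 by rewrite -eq_mulgV1 eh => /eqP ->.
apply/eqP/negPn/negP => c1; set c := h * g^-1 in c1.
have cG1 : c^-1 \in G^#.
  by rewrite in_setD1 invg_eq1 c1 groupV groupM ?groupV ?(setD1P gG1).2.
have [h' /setD1P [h'1 _] eh'] := f_setD1 cG1.
have := shift _ _ _ _ gG1 cG1 hG eh eh'; rewrite invgK -/c.
by move/(canRL (mulgK c)); rewrite mulgV => /eqP; rewrite (negPf h'1).
Qed.

Hypothesis fix_proper :
  forall H : {group gT}, H \proper G -> {in P0 H, forall A, f A = A}.
Hypothesis fix_quotient :
  forall H : {group gT}, H \subset G -> cyclic H -> prime #|H| ->
    {in P0 (G / H), forall B, induced G H f B = B}.

Lemma f_periodic A : A \in P0 G -> periodic G A -> f A = A.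
Proof.
move=> AP [x /setD1P [x1 xG] eA]; have /andP [sAG A1] := AP.
have p_pr : prime (pdiv #[x]) by rewrite pdiv_prime ?order_gt1.
have [y yx oy] := Cauchy p_pr (pdiv_dvd #[x]).
set H := <[y]>%G.
have sHx : H \subset <[x]> by rewrite cycle_subG.
have sHG : H \subset G by rewrite (subset_trans sHx) ?cycle_subG.
have cHG : G \subset 'C(H) by rewrite (subset_trans cGG) ?centS.
have nHG : G \subset 'N(H) := cents_norm cHG.
have H_stable (B : {set gT}) : B \subset G -> B * H = B -> H * B = B.
  by move=> sBG BH; rewrite -{2}BH; apply: centC; rewrite centsC (subset_trans sBG).
have AH : A * H = A.
  apply/eqP; rewrite eqEsubset mulg_subl ?group1 // andbT.
  by rewrite -{2}(mul_pair_cycle eA) mulgS.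
have [eHG | pHG] := eqVneq H G.
  suff -> : A = G by rewrite f_group.
  by apply/eqP; rewrite eqEsubset sAG -eHG -AH mulg_subr.
have {}pHG : H \proper G by rewrite properEneq pHG.
have /andP [sfAG _] := f_P0 AP.
have fAH : f A * H = f A.
  by rewrite -{1}(fix_proper pHG (P0_group H)) -f_mul ?AH // inE sHG group1.
have A_P0 : A / H \in P0 (G / H).
  by rewrite inE quotientS //= -(morph1 (coset H)) mem_morphim ?group1.
have := fix_quotient sHG (cycle_cyclic y) _ A_P0; rewrite /= -/(order y) oy.
rewrite /induced setI_cosetpre_quotient ?H_stable //.
rewrite -morphimEsub ?(subset_trans _ nHG) // => /(_ p_pr).
by apply: quotient_inj_stable; rewrite ?H_stable ?(subset_trans _ nHG).
Qed.

Lemma f_fixed_of_two_outside X p q :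
  2.-abelem G -> X \in P0 G -> p \in G :\: X -> q \in G :\: X -> p != q ->
  f X = X.
Proof.
move=> abelG XP /setDP [pG pX] /setDP [qG qX] pq.
have fix_moves x : x \in G -> X * [set 1; x] != X ->
    f (X * [set 1; x]) = X * [set 1; x].
  move=> xG moved; apply: f_periodic; first by rewrite P0_mul ?P0_pair.
  exists x; last by rewrite mul_pair_idem ?(abelem2_mulgg abelG).
  by rewrite in_setD1 xG andbT; apply: contraNneq moved => ->; rewrite setUid mulg1.
have [// | [u _ eX] | [w w1 efX]] := f_fixed_or_setD1 XP fix_moves f_periodic.
  move: pX qX pq; rewrite eX !inE pG qG !andbT !negbK => /eqP -> /eqP ->.
  by rewrite eqxx.
have xG1 : q^-1 * p \in G^#.
  by rewrite in_setD1 groupM ?groupV // andbT -(inj_eq (mulgI q)) mulKVg mulg1.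
have : X * [set 1; q^-1 * p] = G.
  apply: f_inj; rewrite ?P0_mul ?P0_pair ?P0_group ?(setD1P xG1).2 //.
  by rewrite f_mul_pair ?(setD1P xG1).2 // efX setD1_mul_pair ?f_group.
move/setP/(_ p); rewrite mem_mul_pair invMg invgK mulKVg.
by rewrite (negPf pX) (negPf qX) pG.
Qed.

Lemma f_setD1_id_of_exponent2 :
  2.-abelem G -> ~ G \isog [set: 'I_2 * 'I_2] ->
  {in G^#, forall a, f (G :\ a) = G :\ a}.
Proof.
move=> abelG notC2xC2 a /setD1P [a1 aG].
have [sG1a | /subsetPn [b bG b1a]] := boolP (G \subset [set 1; a]).
  suff -> : G :\ a = 1 by case: f_aut.
  apply/setP => z; rewrite !inE.
  have [-> | z1] /= := eqVneq z 1; first by rewrite eq_sym a1 group1.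
  rewrite andbC; case zG: (z \in G) => //=.
  by move/subsetP: sG1a => /(_ z zG); rewrite !inE (negPf z1) => /= ->.
have [b1 ba] : b != 1 /\ b != a by apply/norP; rewrite -in_set2.
have N1 : 1 \notin [set a; b; a * b].
  rewrite !inE !negb_or !(eq_sym 1) a1 b1 /= -(inj_eq (mulgI a^-1)) mulKg mulg1.
  by apply: contra ba => /eqP ->; rewrite (abelem2_invg abelG).
set V := G :\: [set a; b; a * b]; set Y := [set 1; a * b; b].
have VP : V \in P0 G by rewrite inE subsetDl inE N1 group1.
have aGV : a \in G :\: V by rewrite !inE aG eqxx.
have bGV : b \in G :\: V by rewrite !inE bG eqxx orbT.
have fV : f V = V by rewrite (f_fixed_of_two_outside abelG VP aGV bGV) // eq_sym.
set K := (<[a]> <*> <[b]>)%G.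
have pKG : K \proper G.
  by apply: (join_cycles_proper abelG notC2xC2); rewrite ?in_setD1 ?a1 // inE b1a.
have YK : Y \subset K.
  have [aK bK] : a \in K /\ b \in K by rewrite !mem_gen // !inE !cycle_id ?orbT.
  apply/subsetP => z; rewrite !inE => /orP [/orP [] | ] /eqP ->;
    by rewrite ?group1 ?groupM.
have fY : f Y = Y by rewrite (fix_proper pKG) // inE YK !inE eqxx.
have YP : Y \in P0 G by rewrite inE (subset_trans YK (proper_sub pKG)) !inE eqxx.
by rewrite -(setD3_mul_set3 abelG aG bG N1) f_mul // fV fY.
Qed.

Lemma f_id_of_fixed_setD1 :
  {in G^#, forall g, f (G :\ g) = G :\ g} -> {in P0 G, forall A, f A = A}.
Proof.
move=> fix_setD1 A; have [n] := ubnP #|~: A|; elim: n A => // n IH A lt_A_n AP.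
have fix_moves x : x \in G -> A * [set 1; x] != A ->
    f (A * [set 1; x]) = A * [set 1; x].
  move=> xG moved; apply: IH (P0_mul AP (P0_pair xG)).
  rewrite -ltnS (leq_trans _ lt_A_n) // ltnS proper_card // properC.
  by rewrite properEneq eq_sym moved mulg_subl ?set21.
have [// | [u u1 ->] | [u u1 efA]] := f_fixed_or_setD1 AP fix_moves f_periodic.
  exact: fix_setD1.
have -> : A = G :\ u.
  by apply: (f_inj AP (P0_setD1 G (setD1P u1).1)); rewrite efA fix_setD1.
exact: fix_setD1.
Qed.

End TrivialPullback.

Theorem proposition3p3 (gT : finGroupType) (G : {group gT})
    (f : {set gT} -> {set gT}) :
  abelian G ->
  G :!=: 1 ->
  ~ (G \isog [set: 'I_2 * 'I_2]) ->
  P0_aut G f ->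
  trivial_pullback G f ->
  (forall H : {group gT}, H \proper G -> {in P0 H, forall A, f A = A}) ->
  (forall H : {group gT}, H \subset G -> cyclic H -> prime #|H| ->
     {in P0 (G / H), forall B, induced G H f B = B}) ->
  {in P0 G, forall A, f A = A}.
Proof.
move=> cGG _ notC2xC2 f_aut f_pullback fix_proper fix_quotient.
apply: (f_id_of_fixed_setD1 f_aut f_pullback cGG fix_proper fix_quotient).
have [/exists_inP [t tG t2] | /exists_inP no_t] :=
  boolP [exists t in G, t ^+ 2 != 1].
  exact: f_setD1_id_of_exponent_gt2 tG t2.
apply: f_setD1_id_of_exponent2 fix_quotient _ notC2xC2 => //.
apply/abelemP => //; split=> // t tG.
by apply/eqP/negPn/negP => t2; apply: no_t; exists t.
Qed.
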